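(* Let $f,g:(\mathbb{R}^n,0)\to(\mathbb{R}^p,0)$ be $C^\infty$ map-germs, $s:(\mathbb{R}^n,0)\to(\mathbb{R}^n,0)$ a germ of $C^\infty$ diffeomorphism and $M:(\mathbb{R}^n,0)\to(GL(p,\mathbb{R}),M(0))$ a $C^\infty$ map-germ with $f(x)=M(x)g(s(x))$. Let $F(x,\lambda)=f(x)-M(x)\lambda$ on $(\mathbb{R}^n\times\mathbb{R}^p_\lambda,(0,0))$ with values in $(\mathbb{R}^p_y,0)$, and suppose there are germs of bi-Lipschitz homeomorphisms $h(x,\lambda)=(h_1(x,\lambda),\lambda)$ of $(\mathbb{R}^n\times\mathbb{R}^p_\lambda,(0,0))$ and $H(y,\lambda)=(H_1(y,\lambda),\lambda)$ of $(\mathbb{R}^p_y\times\mathbb{R}^p_\lambda,(0,0))$ such that $H\circ(F,\pi)=(f,\pi)\circ h$, where $\pi(x,\lambda)=\lambda$. If the map-germ $(\mathbb{R}^p_\lambda,0)\to(\mathbb{R}^p_y,0)$, $\lambda\mapsto H_1(0,\lambda)$, is a germ of bi-Lipschitz homeomorphism, then the map-germ $(\mathbb{R}^n,0)\to(\mathbb{R}^n,0)$, $x\mapsto h_1(x,g(s(x)))$, is a germ of bi-Lipschitz homeomorphism.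
   Context: $\mathbb{R}^p_\lambda$ and $\mathbb{R}^p_y$ both denote $\mathbb{R}^p$, playing the role of parameter space and target space respectively. A bi-Lipschitz homeomorphism is a homeomorphism which is Lipschitz (i.e. $\|\varphi(x)-\varphi(y)\|\le c\|x-y\|$ for some $c>0$) and whose inverse is Lipschitz. *)

From Stdlib Require Import Reals.
From mathcomp Require Import all_boot.
Set Implicit Arguments. Unset Strict Implicit. Unset Printing Implicit Defensive.
Local Open Scope R_scope.

Definition vec (n : nat) := 'I_n -> R.
Definition vzero (n : nat) : vec n := fun _ => 0.
Arguments vzero n : clear implicits.
Definition vsub n (x y : vec n) : vec n := fun i => x i - y i.

Definition vnorm n (x : vec n) : R := sqrt (\big[Rplus/0]_(i < n) (x i * x i)).
Definition vdist n (x y : vec n) : R := vnorm (vsub x y).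

Definition pdist a b (z w : vec a * vec b) : R :=
  sqrt (Rsqr (vdist z.1 w.1) + Rsqr (vdist z.2 w.2)).

Definition mat (p : nat) := 'I_p -> 'I_p -> R.
Definition mulmv p (A : mat p) (v : vec p) : vec p :=
  fun i => \big[Rplus/0]_(j < p) (A i j * v j).
Definition invertible p (A : mat p) : Prop :=
  exists B : mat p, forall v, mulmv A (mulmv B v) = v /\ mulmv B (mulmv A v) = v.

Definition open_in {X : Type} (d : X -> X -> R) (U : X -> Prop) : Prop :=
  forall x, U x -> exists r, r > 0 /\ forall y, d x y < r -> U y.

Definition near0 n (P : vec n -> Prop) : Prop :=
  exists r, r > 0 /\ forall x, vdist x (vzero n) < r -> P x.
Definition near00 a b (P : vec a -> vec b -> Prop) : Prop :=
  exists r, r > 0 /\ forall x l, pdist (x, l) (vzero a, vzero b) < r -> P x l.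

Definition shift n (x : vec n) (i : 'I_n) (t : R) : vec n :=
  fun j => x j + (if j == i then t else 0).

Fixpoint Ck n (k : nat) (u : vec n -> R) (U : vec n -> Prop) : Prop :=
  match k with
  | O => forall x, U x -> forall eps, eps > 0 ->
           exists del, del > 0 /\ forall y, vdist y x < del -> Rabs (u y - u x) < eps
  | S k' => (forall x, U x -> forall eps, eps > 0 ->
           exists del, del > 0 /\ forall y, vdist y x < del -> Rabs (u y - u x) < eps)
           /\ exists D : 'I_n -> vec n -> R,
              (forall i x, U x -> derivable_pt_lim (fun t => u (shift x i t)) 0 (D i x))
              /\ forall i, Ck k' (D i) U
  end.

Definition smooth_on n m (f : vec n -> vec m) (U : vec n -> Prop) : Prop :=
  forall (j : 'I_m) (k : nat), Ck k (fun x => f x j) U.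

Definition smooth_germ n m (f : vec n -> vec m) : Prop :=
  exists U, open_in (@vdist n) U /\ U (vzero n) /\ smooth_on f U.

Definition smooth_mat_germ n p (M : vec n -> mat p) : Prop :=
  forall i j : 'I_p, smooth_germ (fun x (_ : 'I_1) => M x i j).

Definition diffeo_germ n (s : vec n -> vec n) : Prop :=
  s (vzero n) = vzero n /\
  exists (U V : vec n -> Prop) (t : vec n -> vec n),
    open_in (@vdist n) U /\ U (vzero n) /\ open_in (@vdist n) V /\ V (vzero n) /\
    smooth_on s U /\ smooth_on t V /\
    (forall x, U x -> V (s x) /\ t (s x) = x) /\
    (forall y, V y -> U (t y) /\ s (t y) = y).

Definition bilip_germ {X Y : Type} (dX : X -> X -> R) (dY : Y -> Y -> R)
    (x0 : X) (y0 : Y) (phi : X -> Y) : Prop :=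
  phi x0 = y0 /\
  exists (U : X -> Prop) (V : Y -> Prop) (c : R),
    open_in dX U /\ U x0 /\ open_in dY V /\ V y0 /\ c > 0 /\
    (forall y, V y <-> exists x, U x /\ phi x = y) /\
    (forall x x', U x -> U x' ->
        dY (phi x) (phi x') <= c * dX x x' /\ dX x x' <= c * dY (phi x) (phi x')).

(* Write q = g o s and phi x = h1 (x, q x).  As f x = M x (q x), the map
   F (x, l) = f x - M x l vanishes on the graph l = q x, so the conjugacy
   H o (F, pi) = (f, pi) o h gives H1 (0, q x) = f (phi x): the graph
   parameter q x is recovered from phi x by the bi-Lipschitz germ
   k : l |-> H1 (0, l).  Hence
   - phi is Lipschitz, because h and q are;
   - phi^-1 is Lipschitz: |x - x'| <= c |h (x, q x) - h (x', q x')| and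
     |q x - q x'| <= c |f (phi x) - f (phi x')|;
   - phi is onto a neighbourhood of 0: for small y pick l with k l = f y and
     (x, l) = h^-1 (y, l); then H1 (F (x, l), l) = f y = H1 (0, l), so
     F (x, l) = 0 by injectivity of H, i.e. M x l = M x (q x), and l = q x. *)

From HB Require Import structures.
From Stdlib Require Import Reals Lra Psatz FunctionalExtensionality.
From mathcomp Require Import all_boot.
Set Implicit Arguments. Unset Strict Implicit.
Local Open Scope R_scope.

HB.instance Definition _ := Monoid.isComLaw.Build R 0 Rplus
  (fun x y z => esym (Rplus_assoc x y z)) Rplus_comm Rplus_0_l.

Lemma sum_le n (a b : 'I_n -> R) : (forall i, a i <= b i) ->
  \big[Rplus/0]_(i < n) a i <= \big[Rplus/0]_(i < n) b i.
Proof.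
by move=> ab; apply: (big_ind2 (fun x y => x <= y)) => //; [lra | move=> *; lra].
Qed.

Lemma sum_ge0 n (a : 'I_n -> R) :
  (forall i, 0 <= a i) -> 0 <= \big[Rplus/0]_(i < n) a i.
Proof.
by move=> a0; apply: (big_ind (fun x => 0 <= x)) => //; [lra | move=> *; lra].
Qed.

Lemma sum_scale n (c : R) (a : 'I_n -> R) :
  \big[Rplus/0]_(i < n) (c * a i) = c * \big[Rplus/0]_(i < n) a i.
Proof.
by apply: (big_ind2 (fun x y => x = c * y)) => [|x1 x2 y1 y2 -> ->|]; [ring | ring | ].
Qed.

Lemma sum_const n (c : R) : \big[Rplus/0]_(i < n) c = INR n * c.
Proof.
elim: n => [|n IH]; first by rewrite big_ord0 /=; ring.
by rewrite big_ord_recr IH S_INR /=; ring.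
Qed.

Lemma sum_abs n (a : 'I_n -> R) :
  Rabs (\big[Rplus/0]_(i < n) a i) <= \big[Rplus/0]_(i < n) Rabs (a i).
Proof.
apply: (big_ind2 (fun x y => Rabs x <= y)) => [|x1 x2 y1 y2 h1 h2|i _].
- by rewrite Rabs_R0; lra.
- by have := Rabs_triang x1 y1; lra.
- lra.
Qed.

Lemma term_le_sum n (a : 'I_n -> R) k : (forall i, 0 <= a i) ->
  a k <= \big[Rplus/0]_(i < n) a i.
Proof.
move=> a_ge0; rewrite (bigD1 k) //=.
have : 0 <= \big[Rplus/0]_(i < n | i != k) a i.
  by apply: (big_ind (fun x => 0 <= x)) => //; [lra | move=> *; lra].
move=> h; set X := bigop _ _ _ in h *; lra.
Qed.

(* Cauchy-Schwarz, from the nonnegativity of t |-> sum (a i + t b i)^2. *)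
Lemma cauchy_schwarz n (a b : 'I_n -> R) :
  \big[Rplus/0]_(i < n) (a i * b i) * \big[Rplus/0]_(i < n) (a i * b i) <=
  \big[Rplus/0]_(i < n) (a i * a i) * \big[Rplus/0]_(i < n) (b i * b i).
Proof.
set A := \big[Rplus/0]_(i < n) (a i * a i).
set B := \big[Rplus/0]_(i < n) (a i * b i).
set C := \big[Rplus/0]_(i < n) (b i * b i).
have quad t : 0 <= A + 2 * t * B + t * t * C.
  have -> : A + 2 * t * B + t * t * C =
            \big[Rplus/0]_(i < n) ((a i + t * b i) * (a i + t * b i)).
    rewrite /A /B /C -!sum_scale -!big_split /=.
    by apply: eq_bigr => i _; ring.
  by apply: sum_ge0 => i; apply: Rle_0_sqr.
have A0 : 0 <= A by apply: sum_ge0 => i; apply: Rle_0_sqr.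
have C0 : 0 <= C by apply: sum_ge0 => i; apply: Rle_0_sqr.
case: (Req_dec C 0) => [C_eq0 | C_ne0].
- case: (Req_dec B 0) => [-> | B_ne0]; first nra.
  have := quad (- (A + 1) / (2 * B)); rewrite C_eq0.
  have -> : A + 2 * (- (A + 1) / (2 * B)) * B = -1 by field.
  lra.
- have Cp : 0 < C by lra.
  have := quad (- B / C).
  have -> : A + 2 * (- B / C) * B + - B / C * (- B / C) * C = (A * C - B * B) / C.
    by field.
  move=> /(Rmult_le_compat_r C _ _ (Rlt_le _ _ Cp)).
  by rewrite Rmult_0_l /Rdiv Rmult_assoc Rinv_l // Rmult_1_r; lra.
Qed.

Lemma vnorm_ge0 n (x : vec n) : 0 <= vnorm x.
Proof. exact: sqrt_pos. Qed.

Lemma vdist_ge0 n (x y : vec n) : 0 <= vdist x y.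
Proof. exact: vnorm_ge0. Qed.

Lemma coord_le_norm n (x : vec n) i : Rabs (x i) <= vnorm x.
Proof.
rewrite /vnorm -sqrt_Rsqr_abs; apply: sqrt_le_1_alt.
by rewrite /Rsqr; apply: (@term_le_sum _ (fun j => x j * x j)) => j; apply: Rle_0_sqr.
Qed.

Lemma vnorm_eq0 n (x : vec n) : vnorm x <= 0 -> x = vzero n.
Proof.
move=> x_le0; apply: functional_extensionality => i.
have := coord_le_norm x i; have := Rabs_pos (x i).
by case: (Req_dec (x i) 0) => // x_ne0; have := Rabs_no_R0 _ x_ne0; lra.
Qed.

Lemma vnorm0 n : vnorm (vzero n) = 0.
Proof.
rewrite /vnorm (eq_bigr (fun _ => 0)); last by move=> i _; rewrite /vzero; ring.
by rewrite sum_const Rmult_0_r sqrt_0.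
Qed.

Lemma vdist0 n (x : vec n) : vdist x (vzero n) = vnorm x.
Proof.
by congr vnorm; apply: functional_extensionality => i; rewrite /vsub /vzero; ring.
Qed.

Lemma vdist_refl n (x : vec n) : vdist x x = 0.
Proof.
rewrite -(vnorm0 n); congr vnorm.
by apply: functional_extensionality => i; rewrite /vsub /vzero; ring.
Qed.

Lemma vnorm_mono n (x y : vec n) :
  (forall i, Rabs (x i) <= Rabs (y i)) -> vnorm x <= vnorm y.
Proof.
by move=> xy; apply: sqrt_le_1_alt; apply: sum_le => i; apply: Rsqr_le_abs_1.
Qed.

Lemma vnorm_eq_abs n (x y : vec n) :
  (forall i, Rabs (x i) = Rabs (y i)) -> vnorm x = vnorm y.
Proof. by move=> xy; apply: Rle_antisym; apply: vnorm_mono => i; rewrite xy; lra. Qed.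

Lemma vnorm_abs n (x : vec n) : vnorm (fun i => Rabs (x i)) = vnorm x.
Proof. by apply: vnorm_eq_abs => i; rewrite Rabs_Rabsolu. Qed.

Lemma vdist_sym n (x y : vec n) : vdist x y = vdist y x.
Proof.
by apply: vnorm_eq_abs => i; rewrite /vsub -Rabs_Ropp; congr Rabs; ring.
Qed.

Lemma vdist0l n (x : vec n) : vdist (vzero n) x = vnorm x.
Proof. by rewrite vdist_sym vdist0. Qed.

(* Minkowski's inequality, i.e. the triangle inequality for the Euclidean
   norm, derived from Cauchy-Schwarz. *)
Lemma vnorm_add n (x y : vec n) : vnorm (fun i => x i + y i) <= vnorm x + vnorm y.
Proof.
rewrite /vnorm.
set A := \big[Rplus/0]_(i < n) (x i * x i).
set B := \big[Rplus/0]_(i < n) (x i * y i).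
set C := \big[Rplus/0]_(i < n) (y i * y i).
have A0 : 0 <= A by apply: sum_ge0 => i; apply: Rle_0_sqr.
have C0 : 0 <= C by apply: sum_ge0 => i; apply: Rle_0_sqr.
have expand : \big[Rplus/0]_(i < n) ((x i + y i) * (x i + y i)) = A + 2 * B + C.
  rewrite /A /B /C -sum_scale -!big_split /=.
  by apply: eq_bigr => i _; ring.
have B_le : B <= sqrt A * sqrt C.
  have cs := cauchy_schwarz x y; rewrite -/A -/B -/C in cs.
  have sAC : sqrt A * sqrt C * (sqrt A * sqrt C) = A * C.
    by rewrite -sqrt_mult // sqrt_sqrt //; apply: Rmult_le_pos.
  have := Rmult_le_pos _ _ (sqrt_pos A) (sqrt_pos C); nra.
rewrite expand -(sqrt_square (sqrt A + sqrt C)); last first.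
  by have := sqrt_pos A; have := sqrt_pos C; lra.
apply: sqrt_le_1_alt.
have := sqrt_sqrt A A0; have := sqrt_sqrt C C0; nra.
Qed.

Lemma vnorm_coordwise n (x y z : vec n) :
  (forall i, Rabs (z i) <= Rabs (x i) + Rabs (y i)) -> vnorm z <= vnorm x + vnorm y.
Proof.
move=> zxy; rewrite -(vnorm_abs x) -(vnorm_abs y).
apply: Rle_trans (vnorm_add _ _); apply: vnorm_mono => i.
rewrite (Rabs_right (_ + _)); first exact: zxy.
by have := Rabs_pos (x i); have := Rabs_pos (y i); lra.
Qed.

Lemma vdist_triangle n (x y z : vec n) : vdist x z <= vdist x y + vdist y z.
Proof.
apply: vnorm_coordwise => i; rewrite /vsub.
have -> : x i - z i = (x i - y i) + (y i - z i) by ring.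
exact: Rabs_triang.
Qed.

Lemma vnorm_sub n (x y : vec n) : vnorm (vsub x y) <= vnorm x + vnorm y.
Proof.
by apply: vnorm_coordwise => i; rewrite /vsub -(Rabs_Ropp (y i)); apply: Rabs_triang.
Qed.

Lemma vnorm_coord_bound n (z : vec n) c : 0 <= c ->
  (forall i, Rabs (z i) <= c) -> vnorm z <= sqrt (INR n) * c.
Proof.
move=> c0 zc; apply: (Rle_trans _ (vnorm (fun _ => c))).
  by apply: vnorm_mono => i; rewrite (Rabs_right c); [apply: zc | lra].
rewrite /vnorm sum_const sqrt_mult_alt; last exact: pos_INR.
by rewrite sqrt_square //; lra.
Qed.

Lemma pdist_ge1 a b (z w : vec a * vec b) : vdist z.1 w.1 <= pdist z w.
Proof.
rewrite /pdist -{1}(sqrt_Rsqr (vdist z.1 w.1)); last exact: vdist_ge0.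
by apply: sqrt_le_1_alt; have := Rle_0_sqr (vdist z.2 w.2); lra.
Qed.

Lemma pdist_le a b (z w : vec a * vec b) : pdist z w <= vdist z.1 w.1 + vdist z.2 w.2.
Proof.
have d1 := vdist_ge0 z.1 w.1; have d2 := vdist_ge0 z.2 w.2.
rewrite /pdist -(sqrt_Rsqr (vdist z.1 w.1 + vdist z.2 w.2)); last lra.
by apply: sqrt_le_1_alt; rewrite /Rsqr; nra.
Qed.

Lemma pdist_sym a b (z w : vec a * vec b) : pdist z w = pdist w z.
Proof. by rewrite /pdist vdist_sym (vdist_sym z.2). Qed.

Lemma pdist_refl a b (z : vec a * vec b) : pdist z z = 0.
Proof. by rewrite /pdist !vdist_refl Rsqr_0 Rplus_0_r sqrt_0. Qed.

Lemma pdist0 a b (x : vec a) (l : vec b) :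
  pdist (vzero a, vzero b) (x, l) <= vnorm x + vnorm l.
Proof. by apply: Rle_trans (pdist_le _ _) _; rewrite /= !vdist0l; lra. Qed.

Lemma lt_mul_of_lt_div a b d : 0 < b -> d < a / b -> b * d < a.
Proof.
move=> b0 d_lt; apply: (Rmult_lt_reg_r (/ b)); first exact: Rinv_0_lt_compat.
by rewrite Rmult_comm -Rmult_assoc Rinv_l ?Rmult_1_l //; lra.
Qed.

Lemma near0_ball n (P : vec n -> Prop) :
  near0 P -> exists r, 0 < r /\ forall x, vnorm x < r -> P x.
Proof. by case=> r [r0 Pr]; exists r; split => // x; rewrite -vdist0; apply: Pr. Qed.

Lemma near0_mono n (P Q : vec n -> Prop) :
  near0 P -> (forall x, P x -> Q x) -> near0 Q.
Proof. by case=> r [r0 Pr] PQ; exists r; split => // x /Pr /PQ. Qed.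

Lemma near0_and n (P Q : vec n -> Prop) :
  near0 P -> near0 Q -> near0 (fun x => P x /\ Q x).
Proof.
case=> r [r0 Pr] [r' [r'0 Qr']]; exists (Rmin r r'); split; first exact: Rmin_pos.
move=> x x_lt; have := Rmin_l r r'; have := Rmin_r r r'.
by split; [apply: Pr | apply: Qr']; lra.
Qed.

Lemma near0_lin n (K e : R) : 0 < e -> near0 (fun x : vec n => K * vnorm x < e).
Proof.
move=> e0; exists (e / (Rabs K + 1)); split.
  by apply: Rdiv_lt_0_compat => //; have := Rabs_pos K; lra.
move=> x; rewrite vdist0 => /lt_mul_of_lt_div x_lt.
have K1 : 0 < Rabs K + 1 by have := Rabs_pos K; lra.
have := x_lt K1; have := vnorm_ge0 x; have := Rle_abs K; nra.
Qed.

Lemma ball_open n (r : R) : open_in (@vdist n) (fun x => vnorm x < r).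
Proof.
move=> x x_lt; exists (r - vnorm x); split; first lra.
move=> y; have := vdist_triangle y x (vzero n).
by rewrite !vdist0 vdist_sym; lra.
Qed.

Lemma open_lip_preimage n m (W : vec n -> Prop) (V : vec m -> Prop)
    (phi : vec n -> vec m) (c : R) :
  0 <= c -> open_in (@vdist n) W -> open_in (@vdist m) V ->
  (forall x x', W x -> W x' -> vdist (phi x) (phi x') <= c * vdist x x') ->
  open_in (@vdist n) (fun x => W x /\ V (phi x)).
Proof.
move=> c0 W_open V_open phi_lip x [Wx Vphix].
case: (W_open x Wx) => a [a0 Wa]; case: (V_open _ Vphix) => b [b0 Vb].
exists (Rmin a (b / (c + 1))); split.
  by apply: Rmin_pos => //; apply: Rdiv_lt_0_compat; lra.
move=> y xy_lt; have := Rmin_l a (b / (c + 1)); have := Rmin_r a (b / (c + 1)).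
move=> xy_b xy_a; have Wy : W y by apply: Wa; lra.
split => //; apply: Vb; apply: Rle_lt_trans (phi_lip _ _ Wx Wy) _.
have := @lt_mul_of_lt_div b (c + 1) (vdist x y) ltac:(lra) ltac:(lra).
have := vdist_ge0 x y; nra.
Qed.

Record bilip_chart {X Y : Type} (dX : X -> X -> R) (dY : Y -> Y -> R)
    (x0 : X) (y0 : Y) (phi : X -> Y) := BilipChart {
  chart_dom : X -> Prop;
  chart_const : R;
  chart_radius : R;
  chart_const_pos : 0 < chart_const;
  chart_radius_pos : 0 < chart_radius;
  chart_base : phi x0 = y0;
  chart_ball : forall x, dX x0 x < chart_radius -> chart_dom x;
  chart_upper : forall x x', chart_dom x -> chart_dom x' ->
    dY (phi x) (phi x') <= chart_const * dX x x';
  chart_lower : forall x x', chart_dom x -> chart_dom x' ->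
    dX x x' <= chart_const * dY (phi x) (phi x');
  chart_onto : forall y, dY y0 y < chart_radius ->
    exists x, chart_dom x /\ phi x = y }.

Lemma bilip_germ_chart {X Y : Type} (dX : X -> X -> R) (dY : Y -> Y -> R)
    (x0 : X) (y0 : Y) (phi : X -> Y) :
  bilip_germ dX dY x0 y0 phi -> inhabited (bilip_chart dX dY x0 y0 phi).
Proof.
case=> phi0 [U [V [c [U_open [Ux0 [V_open [Vy0 [c0 [V_img est]]]]]]]]].
case: (U_open x0 Ux0) => a [a0 Ua]; case: (V_open y0 Vy0) => b [b0 Vb].
have min_a := Rmin_l a b; have min_b := Rmin_r a b.
constructor; apply: (@BilipChart _ _ dX dY x0 y0 phi U c (Rmin a b)) => //.
- exact: Rmin_pos.
- by move=> x x_lt; apply: Ua; lra.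
- by move=> x x' Ux Ux'; case: (est x x' Ux Ux').
- by move=> x x' Ux Ux'; case: (est x x' Ux Ux').
- by move=> y y_lt; apply/V_img/Vb; lra.
Qed.

Lemma bilip_germ_of_estimates n (phi : vec n -> vec n) (rho r c C : R) :
  0 < rho -> 0 < r -> 0 < c -> 0 <= C -> phi (vzero n) = vzero n ->
  (forall x x', vnorm x < rho -> vnorm x' < rho ->
     vdist (phi x) (phi x') <= c * vdist x x' /\
     vdist x x' <= c * vdist (phi x) (phi x')) ->
  (forall y, vnorm y < r -> exists x, vnorm x <= C * vnorm y /\ phi x = y) ->
  bilip_germ (@vdist n) (@vdist n) (vzero n) (vzero n) phi.
Proof.
move=> rho0 r0 c0 C0 phi0 est onto.
set r' := Rmin r (rho / (C + 1)).
have r'0 : 0 < r' by apply: Rmin_pos => //; apply: Rdiv_lt_0_compat; lra.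
have r'_r : r' <= r := Rmin_l _ _.
have r'_rho : r' <= rho / (C + 1) := Rmin_r _ _.
split => //.
exists (fun x => vnorm x < rho /\ vnorm (phi x) < r'), (fun y => vnorm y < r'), c.
split; [|split; [|split; [|split; [|split; [|split]]]]].
- apply: (@open_lip_preimage _ _ _ (fun y => vnorm y < r') phi c);
    [lra | exact: ball_open | exact: ball_open |].
  by move=> x x' x_lt x'_lt; case: (est x x' x_lt x'_lt).
- by rewrite phi0 vnorm0.
- exact: ball_open.
- by rewrite vnorm0.
- exact: c0.
- move=> y; split.
  + move=> y_lt; case: (onto y ltac:(lra)) => x [x_le phix]; exists x; rewrite phix.
    split => //; split => //.
    have := @lt_mul_of_lt_div rho (C + 1) (vnorm y) ltac:(lra) ltac:(lra).
    have := vnorm_ge0 y; nra.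
  + by case=> x [[_ phix_lt] <-].
- by move=> x x' [x_lt _] [x'_lt _]; apply: est.
Qed.

Lemma mvt_bound (phi dphi : R -> R) a b K :
  (forall t, Rmin a b <= t <= Rmax a b ->
     derivable_pt_lim phi t (dphi t) /\ Rabs (dphi t) <= K) ->
  Rabs (phi b - phi a) <= K * Rabs (b - a).
Proof.
move=> H; case: (MVT_abs phi dphi a b (fun t ht => proj1 (H t ht))) => t [-> ht].
by apply: Rmult_le_compat_r; [apply: Rabs_pos | apply: (proj2 (H t ht))].
Qed.

Lemma shift_shift n (z : vec n) i c t : shift (shift z i c) i t = shift z i (c + t).
Proof.
by apply: functional_extensionality => j; rewrite /shift; case: (j == i); ring.
Qed.

Lemma shift0 n (z : vec n) i : shift z i 0 = z.
Proof.
by apply: functional_extensionality => j; rewrite /shift; case: (j == i); ring.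
Qed.

Lemma partial_at_shift n (u : vec n -> R) z i c D :
  derivable_pt_lim (fun t => u (shift (shift z i c) i t)) 0 D ->
  derivable_pt_lim (fun t => u (shift z i t)) c D.
Proof.
move=> H eps eps0; case: (H eps eps0) => del Hdel; exists del => h h0 h_lt.
by have := Hdel h h0 h_lt; rewrite !shift_shift Rplus_0_l Rplus_0_r.
Qed.

(* The staircase from x to y: its first k coordinates are those of y, the
   others those of x; consecutive points differ along one coordinate axis. *)
Definition staircase n (x y : vec n) (k : nat) : vec n :=
  fun j => if (j < k)%N then y j else x j.

Lemma staircase_step n (x y : vec n) k (k_lt : (k < n)%N) :
  staircase x y k.+1 =
  shift (staircase x y k) (Ordinal k_lt) (y (Ordinal k_lt) - x (Ordinal k_lt)).
Proof.
apply: functional_extensionality => j; rewrite /staircase /shift.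
case: (eqVneq j (Ordinal k_lt)) => [-> | j_ne] /=; first by rewrite ltnn leqnn; ring.
have : nat_of_ord j <> k by move=> jk; move/eqP: j_ne; apply; apply: val_inj.
by rewrite ltnS leq_eqVlt; case: (ltngtP j k) => // _ _ /=; ring.
Qed.

Lemma staircase_segment_bound n (x y : vec n) (i : 'I_n) t :
  Rmin 0 (y i - x i) <= t <= Rmax 0 (y i - x i) ->
  forall j, Rabs (shift (staircase x y i) i t j) <= Rabs (x j) + Rabs (y j).
Proof.
move=> t_in j; rewrite /shift /staircase.
case: (eqVneq j i) => [-> | j_ne].
- rewrite ltnn; move: t_in; rewrite /Rmin /Rmax.
  by case: (Rle_dec 0 _) => _ t_in; rewrite /Rabs;
     case: (Rcase_abs _); case: (Rcase_abs (x i)); case: (Rcase_abs (y i)); lra.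
- rewrite Rplus_0_r; have := Rabs_pos (x j); have := Rabs_pos (y j).
  by case: (j < i)%N; lra.
Qed.

Lemma lip_of_bounded_partials n (u : vec n -> R) (D : 'I_n -> vec n -> R) (Rad K : R) :
  (forall i z, vnorm z < Rad ->
     derivable_pt_lim (fun t => u (shift z i t)) 0 (D i z) /\ Rabs (D i z) <= K) ->
  forall x y, vnorm x + vnorm y < Rad ->
  Rabs (u y - u x) <= INR n * K * vdist y x.
Proof.
move=> partials x y xy_lt.
suff steps : forall k, (k <= n)%N ->
    Rabs (u (staircase x y k) - u x) <= INR k * (K * vdist y x).
  have full : staircase x y n = y.
    by apply: functional_extensionality => j; rewrite /staircase ltn_ord.
  by have := steps n (leqnn n); rewrite full Rmult_assoc.
elim=> [|k IH] k_le.
  have -> : staircase x y 0 = x by apply: functional_extensionality.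
  by rewrite Rminus_diag Rabs_R0 /=; lra.
rewrite (staircase_step x y k_le) S_INR.
set i := Ordinal k_le; set z := staircase x y k; set d := y i - x i.
have step : Rabs (u (shift z i d) - u z) <= K * Rabs (d - 0).
  rewrite -{2}(shift0 z i).
  apply: (@mvt_bound (fun t => u (shift z i t)) (fun t => D i (shift z i t))) => t t_in.
  have near : vnorm (shift z i t) < Rad.
    apply: Rle_lt_trans xy_lt; apply: vnorm_coordwise.
    by move=> j; apply: (@staircase_segment_bound n x y i t)...
  case: (partials i _ near) => deriv bound; split => //.
  exact: partial_at_shift.
have d_le : Rabs (d - 0) <= vdist y x.
  by rewrite Rminus_0_r; exact: (coord_le_norm (vsub y x) i).
have K0 : 0 <= K.
  have R0 : vnorm (vzero n) < Rad.
    by rewrite vnorm0; have := vnorm_ge0 x; have := vnorm_ge0 y; lra.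
  by case: (partials i _ R0) => _; have := Rabs_pos (D i (vzero n)); lra.
have := IH (ltnW k_le); rewrite -/z.
have := Rabs_triang (u (shift z i d) - u z) (u z - u x).
have -> : u (shift z i d) - u z + (u z - u x) = u (shift z i d) - u x by ring.
have : K * Rabs (d - 0) <= K * vdist y x by apply: Rmult_le_compat_l.
lra.
Qed.

Lemma fin_choice n (Q : 'I_n -> R -> R -> Prop) :
  (forall i, exists r K, 0 < r /\ Q i r K) ->
  (forall i r K r' K', Q i r K -> 0 < r' -> r' <= r -> K <= K' -> Q i r' K') ->
  exists r K, 0 < r /\ forall i, Q i r K.
Proof.
move=> HQ Qmono.
suff: forall k, (k <= n)%N ->
    exists r K, 0 < r /\ forall i : 'I_n, (i < k)%N -> Q i r K.
  by move=> /(_ n (leqnn n)) [r [K [r0 H]]]; exists r, K; split => // i; apply: H.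
elim=> [|k IH] k_le; first by exists 1, 0; split => //; lra.
case: (IH (ltnW k_le)) => r [K [r0 H]].
case: (HQ (Ordinal k_le)) => r1 [K1 [r10 H1]].
exists (Rmin r r1), (Rmax K K1); split; first exact: Rmin_pos.
move=> i; rewrite ltnS leq_eqVlt => /orP [/eqP i_k | i_lt].
- have -> : i = Ordinal k_le by apply: val_inj.
  by apply: (Qmono _ r1 K1) => //; [exact: Rmin_pos | exact: Rmin_r | exact: Rmax_r].
- by apply: (Qmono _ r K); [exact: H | exact: Rmin_pos | exact: Rmin_l | exact: Rmax_l].
Qed.

(* A C^1 function is Lipschitz on a ball around 0: its partial derivatives
   are continuous, hence bounded near 0. *)
Lemma C1_lip n (u : vec n -> R) (U : vec n -> Prop) :
  open_in (@vdist n) U -> U (vzero n) -> Ck 1 u U ->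
  exists r K, 0 < r /\ 0 <= K /\
    forall x y, vnorm x < r -> vnorm y < r -> Rabs (u x - u y) <= K * vdist x y.
Proof.
move=> U_open U0 [_ [D [D_deriv D_cont]]].
case: (U_open _ U0) => rU [rU0 U_ball].
have [del [K [del0 D_bound]]] :
    exists del K, 0 < del /\ forall i z, vnorm z < del -> Rabs (D i z) <= K.
  apply: (@fin_choice n (fun i del K => forall z, vnorm z < del -> Rabs (D i z) <= K)).
  - move=> i; case: (D_cont i (vzero n) U0 1 Rlt_0_1) => d [d0 Hd].
    exists d, (Rabs (D i (vzero n)) + 1); split => // z z_lt.
    have := Hd z; rewrite vdist0 => /(_ z_lt) close.
    by have := Rabs_triang_inv (D i z) (D i (vzero n)); lra.
  - by move=> i r K' r' K'' H r'0 r'_le K_le z z_lt; have := H z; lra.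
set Rad := Rmin del rU.
have Rad_del : Rad <= del := Rmin_l _ _; have Rad_U : Rad <= rU := Rmin_r _ _.
have Rad0 : 0 < Rad by apply: Rmin_pos.
have partials : forall i z, vnorm z < Rad ->
    derivable_pt_lim (fun t => u (shift z i t)) 0 (D i z) /\ Rabs (D i z) <= Rmax K 0.
  move=> i z z_lt; split; last by apply: Rle_trans (Rmax_l K 0); apply: D_bound; lra.
  by apply: D_deriv; apply: U_ball; rewrite vdist0l; lra.
exists (Rad / 2), (INR n * Rmax K 0); split; first lra.
split; first by apply: Rmult_le_pos; [exact: pos_INR | exact: Rmax_r].
by move=> x y x_lt y_lt; apply: (lip_of_bounded_partials partials); lra.
Qed.

Definition lip_germ n m (F : vec n -> vec m) (L : R) : Prop :=
  exists r, 0 < r /\ forall x y, vnorm x < r -> vnorm y < r ->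
    vdist (F x) (F y) <= L * vdist x y.

Lemma smooth_lip n m (F : vec n -> vec m) :
  smooth_germ F -> exists L, 0 <= L /\ lip_germ F L.
Proof.
case=> U [U_open [U0 F_smooth]].
have [r [K [r0 comp_lip]]] : exists r K, 0 < r /\ forall j : 'I_m, 0 <= K /\
    forall x y, vnorm x < r -> vnorm y < r -> Rabs (F x j - F y j) <= K * vdist x y.
  apply: fin_choice => [j | j r K r' K' [K0 H] r'0 r'_le K_le].
  - case: (C1_lip U_open U0 (F_smooth j 1%N)) => r [K [r0 [K0 H]]].
    by exists r, K.
  - split; first lra; move=> x y x_lt y_lt; apply: Rle_trans (H x y _ _) _; try lra.
    by apply: Rmult_le_compat_r; [exact: vdist_ge0 | lra].
have K0 : 0 <= Rmax K 0 := Rmax_r _ _.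
exists (sqrt (INR m) * Rmax K 0); split; first exact: Rmult_le_pos (sqrt_pos _) K0.
exists r; split => // x y x_lt y_lt; rewrite Rmult_assoc.
apply: vnorm_coord_bound => [|j]; first exact: Rmult_le_pos K0 (vdist_ge0 x y).
apply: Rle_trans (proj2 (comp_lip j) x y x_lt y_lt) _.
by apply: Rmult_le_compat_r; [exact: vdist_ge0 | exact: Rmax_l].
Qed.

Lemma lip_germ_comp n m k (F : vec n -> vec m) (G : vec m -> vec k) (LF LG : R) :
  0 <= LF -> 0 <= LG -> F (vzero n) = vzero m ->
  lip_germ F LF -> lip_germ G LG -> lip_germ (fun x => G (F x)) (LG * LF).
Proof.
move=> LF0 LG0 F0 [rF [rF0 F_lip]] [rG [rG0 G_lip]].
have small x : vnorm x < Rmin rF (rG / (LF + 1)) -> vnorm x < rF /\ vnorm (F x) < rG.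
  move=> x_lt; have x_rF : vnorm x < rF := Rlt_le_trans _ _ _ x_lt (Rmin_l _ _).
  split => //; have := F_lip x (vzero n) x_rF ltac:(rewrite vnorm0; lra).
  rewrite F0 !vdist0 => Fx_le.
  have := @lt_mul_of_lt_div rG (LF + 1) (vnorm x) ltac:(lra)
            (Rlt_le_trans _ _ _ x_lt (Rmin_r _ _)).
  by have := vnorm_ge0 x; nra.
exists (Rmin rF (rG / (LF + 1))); split.
  by apply: Rmin_pos => //; apply: Rdiv_lt_0_compat; lra.
move=> x y /small [x_rF Fx_rG] /small [y_rF Fy_rG].
apply: Rle_trans (G_lip _ _ Fx_rG Fy_rG) _; rewrite Rmult_assoc.
by apply: Rmult_le_compat_l => //; apply: F_lip.
Qed.

Lemma diffeo_germ_smooth n (s : vec n -> vec n) :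
  diffeo_germ s -> s (vzero n) = vzero n /\ smooth_germ s.
Proof.
by case=> s0 [U [V [t [U_open [U0 [_ [_ [s_smooth _]]]]]]]]; split => //; exists U.
Qed.

Lemma smooth_mat_entries_bounded n p (M : vec n -> mat p) :
  smooth_mat_germ M ->
  exists B, 0 <= B /\ near0 (fun x => forall i j, Rabs (M x i j) <= B).
Proof.
move=> M_smooth.
have entry i j : exists r B, 0 < r /\ forall x, vnorm x < r -> Rabs (M x i j) <= B.
  case: (smooth_lip (M_smooth i j)) => L [L0 [r [r0 lip]]].
  exists r, (Rabs (M (vzero n) i j) + L * r); split => // x x_lt.
  have := lip x (vzero n) x_lt ltac:(rewrite vnorm0; lra); rewrite vdist0 => dist_le.
  have := coord_le_norm
    (vsub (fun _ : 'I_1 => M x i j) (fun _ => M (vzero n) i j)) ord0.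
  rewrite /vsub -/(vdist _ _) => entry_le.
  by have := Rabs_triang_inv (M x i j) (M (vzero n) i j); nra.
have [r [B [r0 rows]]] : exists r B, 0 < r /\ forall i x, vnorm x < r ->
    forall j, Rabs (M x i j) <= B.
  apply: fin_choice => [i | i r B r' B' H r'0 r'_le B_le x x_lt j].
  - case: (@fin_choice p (fun j r B => forall x, vnorm x < r -> Rabs (M x i j) <= B)
             (entry i)) => [j r B r' B' H r'0 r'_le B_le x x_lt | r [B [r0 H]]].
      by have := H x; lra.
    by exists r, B; split => // x x_lt j; apply: H.
  - by have := H x ltac:(lra) j; lra.
exists (Rmax B 0); split; first exact: Rmax_r.
exists r; split => // x; rewrite vdist0 => x_lt i j.
exact: Rle_trans (rows i x x_lt j) (Rmax_l _ _).
Qed.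

Lemma mulmv_bound p (A : mat p) (v : vec p) (B : R) : 0 <= B ->
  (forall i j, Rabs (A i j) <= B) ->
  vnorm (mulmv A v) <= sqrt (INR p) * (INR p * B) * vnorm v.
Proof.
move=> B0 A_le; rewrite Rmult_assoc Rmult_assoc; apply: vnorm_coord_bound => [|i].
  by apply: Rmult_le_pos; [exact: pos_INR | exact: Rmult_le_pos B0 (vnorm_ge0 v)].
apply: Rle_trans (sum_abs _) _; rewrite -sum_const; apply: sum_le => j.
rewrite Rabs_mult; apply: Rmult_le_compat; try exact: Rabs_pos.
  exact: A_le.
exact: coord_le_norm.
Qed.

Lemma smooth_mat_operator_bound n p (M : vec n -> mat p) :
  smooth_mat_germ M ->
  exists C, 0 <= C /\ near0 (fun x => forall v, vnorm (mulmv (M x) v) <= C * vnorm v).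
Proof.
case/smooth_mat_entries_bounded => B [B0 entries].
exists (sqrt (INR p) * (INR p * B)); split.
  apply: Rmult_le_pos; first exact: sqrt_pos.
  by apply: Rmult_le_pos; [exact: pos_INR | lra].
by apply: (near0_mono entries) => x M_le v; exact: mulmv_bound.
Qed.

Lemma lip_ball_at0 n m (F : vec n -> vec m) (r L : R) :
  F (vzero n) = vzero m ->
  (forall x y, vnorm x < r -> vnorm y < r -> vdist (F x) (F y) <= L * vdist x y) ->
  forall x, vnorm x < r -> vnorm (F x) <= L * vnorm x.
Proof.
move=> F0 F_lip x x_lt; have r0 : 0 < r by have := vnorm_ge0 x; lra.
by have := F_lip x (vzero n) x_lt; rewrite vnorm0 F0 !vdist0; apply.
Qed.

Section GraphConjugacy.

(* The core argument, with the smoothness hypotheses of the theorem replaced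
   by the Lipschitz and boundedness properties they are used for; q stands
   for g o s. *)
Variables (n p : nat) (f q : vec n -> vec p) (M : vec n -> mat p)
  (h1 : vec n -> vec p -> vec n) (H1 : vec p -> vec p -> vec p).
Variables (rf Lf rq Lq Cm : R).
Hypotheses (rf0 : 0 < rf) (rq0 : 0 < rq).
Hypotheses (Lf0 : 0 <= Lf) (Lq0 : 0 <= Lq) (Cm0 : 0 <= Cm).
Hypotheses (f0 : f (vzero n) = vzero p) (q0 : q (vzero n) = vzero p).
Hypothesis f_lip : forall x y, vnorm x < rf -> vnorm y < rf ->
  vdist (f x) (f y) <= Lf * vdist x y.
Hypothesis q_lip : forall x y, vnorm x < rq -> vnorm y < rq ->
  vdist (q x) (q y) <= Lq * vdist x y.
Hypothesis M_inv : near0 (fun x => invertible (M x)).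
Hypothesis M_bound : near0 (fun x => forall v, vnorm (mulmv (M x) v) <= Cm * vnorm v).
Hypothesis f_eq : near0 (fun x => f x = mulmv (M x) (q x)).
Hypothesis conjugacy :
  near00 (fun x l => H1 (vsub (f x) (mulmv (M x) l)) l = f (h1 x l)).
Variable ch : bilip_chart (@pdist n p) (@pdist n p) (vzero n, vzero p)
  (vzero n, vzero p) (fun z => (h1 z.1 z.2, z.2)).
Variable cH : bilip_chart (@pdist p p) (@pdist p p) (vzero p, vzero p)
  (vzero p, vzero p) (fun z => (H1 z.1 z.2, z.2)).
Variable ck : bilip_chart (@vdist p) (@vdist p) (vzero p) (vzero p)
  (fun l => H1 (vzero p) l).

Let phi x := h1 x (q x).
Let c_h := chart_const ch.
Let c_k := chart_const ck.

Lemma phi0 : phi (vzero n) = vzero n.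
Proof. by rewrite /phi q0; case: (chart_base ch). Qed.

Lemma graph_in_chart x : vnorm x < rq -> (1 + Lq) * vnorm x < chart_radius ch ->
  chart_dom ch (x, q x).
Proof.
move=> x_rq x_small; apply: chart_ball; apply: Rle_lt_trans (pdist0 _ _) _.
by have := lip_ball_at0 q0 q_lip x_rq; lra.
Qed.

(* phi is Lipschitz: h is Lipschitz and |(x, q x) - (x', q x')| <= (1 + Lq) |x - x'|. *)
Lemma phi_upper x x' : vnorm x < rq -> vnorm x' < rq ->
  chart_dom ch (x, q x) -> chart_dom ch (x', q x') ->
  vdist (phi x) (phi x') <= c_h * (1 + Lq) * vdist x x'.
Proof.
move=> x_rq x'_rq dom dom'.
have h_lip := chart_upper dom dom'.
have phi_le := pdist_ge1 (h1 x (q x), q x) (h1 x' (q x'), q x').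
have graph_le := pdist_le (x, q x) (x', q x').
have q_le := q_lip x_rq x'_rq; rewrite /= in h_lip phi_le graph_le.
have : c_h * pdist (x, q x) (x', q x') <= c_h * (1 + Lq) * vdist x x'.
  rewrite Rmult_assoc; apply: Rmult_le_compat_l; last lra.
  by have := chart_const_pos ch; rewrite /c_h; lra.
by rewrite /phi /c_h in h_lip *; lra.
Qed.

(* The conjugacy at l = q x reads H1 (0, q x) = f (phi x), so q x is
   recovered from phi x through the bi-Lipschitz map l |-> H1 (0, l). *)
Lemma phi_lower x x' :
  chart_dom ch (x, q x) -> chart_dom ch (x', q x') ->
  chart_dom ck (q x) -> chart_dom ck (q x') ->
  H1 (vzero p) (q x) = f (phi x) -> H1 (vzero p) (q x') = f (phi x') ->
  vnorm (phi x) < rf -> vnorm (phi x') < rf ->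
  vdist x x' <= c_h * (1 + c_k * Lf) * vdist (phi x) (phi x').
Proof.
move=> dom dom' kdom kdom' key key' phi_rf phi'_rf.
have h_inv := chart_lower dom dom'.
have x_le := pdist_ge1 (x, q x) (x', q x').
have img_le := pdist_le (h1 x (q x), q x) (h1 x' (q x'), q x').
rewrite /= in h_inv x_le img_le.
have q_le : vdist (q x) (q x') <= c_k * Lf * vdist (phi x) (phi x').
  apply: Rle_trans (chart_lower kdom kdom') _; rewrite key key' Rmult_assoc.
  apply: Rmult_le_compat_l; first by have := chart_const_pos ck; rewrite /c_k; lra.
  exact: f_lip.
have : c_h * pdist (h1 x (q x), q x) (h1 x' (q x'), q x') <=
       c_h * (1 + c_k * Lf) * vdist (phi x) (phi x').
  rewrite Rmult_assoc; apply: Rmult_le_compat_l.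
    by have := chart_const_pos ch; rewrite /c_h; lra.
  by rewrite /phi in q_le *; lra.
by rewrite /phi /c_h in h_inv *; lra.
Qed.


Definition regular x := [/\ vnorm x < rq, chart_dom ch (x, q x), chart_dom ck (q x),
  H1 (vzero p) (q x) = f (phi x) & vnorm (phi x) < rf].

Lemma vsub_self m (v : vec m) : vsub v v = vzero m.
Proof. by apply: functional_extensionality => i; rewrite /vsub /vzero; ring. Qed.

Lemma regular_near0 : near0 regular.
Proof.
case: conjugacy => rN [rN0 conjN].
have small := near0_and (near0_lin n 1 rq0)
  (near0_and (near0_lin n (1 + Lq) (chart_radius_pos ch))
  (near0_and (near0_lin n Lq (chart_radius_pos ck))
  (near0_and (near0_lin n (1 + Lq) rN0) (near0_lin n (c_h * (1 + Lq)) rf0)))).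
apply: (near0_mono (near0_and small f_eq)) => x [[x_rq [x_h [x_k [x_N x_f]]]] fx].
have {}x_rq : vnorm x < rq by lra.
have qx_le := lip_ball_at0 q0 q_lip x_rq.
have dom := graph_in_chart x_rq x_h.
have dom0 : chart_dom ch (vzero n, q (vzero n)).
  by rewrite q0; apply: chart_ball; rewrite pdist_refl; exact: chart_radius_pos.
split => //.
- by apply: chart_ball; rewrite vdist0l; lra.
- have graph_near : pdist (x, q x) (vzero n, vzero p) < rN.
    by rewrite pdist_sym; apply: Rle_lt_trans (pdist0 _ _) _; lra.
  by have := conjN x (q x) graph_near; rewrite -fx vsub_self.
- have zero_rq : vnorm (vzero n) < rq by rewrite vnorm0.
  have := phi_upper x_rq zero_rq dom dom0.
  by rewrite phi0 !vdist0; lra.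
Qed.

Lemma lift_point y : vnorm y < rf -> Lf * vnorm y < chart_radius ck ->
  (1 + c_k * Lf) * vnorm y < chart_radius ch ->
  exists x l, [/\ vnorm l <= c_k * Lf * vnorm y,
    vnorm x <= c_h * (1 + c_k * Lf) * vnorm y, h1 x l = y & H1 (vzero p) l = f y].
Proof.
move=> y_rf fy_small hy_small.
have fy_le := lip_ball_at0 f0 f_lip y_rf.
have ck_c := chart_const_pos ck; have ch_c := chart_const_pos ch.
case: (chart_onto (b := ck) (y := f y)) => [|l [kdom kl]].
  by rewrite vdist0l; lra.
have kdom0 : chart_dom ck (vzero p).
  by apply: chart_ball; rewrite vdist_refl; exact: chart_radius_pos.
have l_le : vnorm l <= c_k * Lf * vnorm y.
  have := chart_lower kdom kdom0; rewrite kl (chart_base ck) !vdist0 => l_le.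
  apply: Rle_trans l_le _; rewrite Rmult_assoc; apply: Rmult_le_compat_l => //.
  by rewrite /c_k; lra.
case: (chart_onto (b := ch) (y := (y, l))) => [|[x l'] [hdom [hx l'_l]]].
  apply: Rle_lt_trans (pdist0 _ _) _; have := vnorm_ge0 y; lra.
have hdom0 : chart_dom ch (vzero n, vzero p).
  by apply: chart_ball; rewrite pdist_refl; exact: chart_radius_pos.
subst l'; exists x, l; split => //; rewrite /= in hx.
have := chart_lower hdom hdom0; rewrite (chart_base ch) /= hx => x_le.
have := pdist_ge1 (x, l) (vzero n, vzero p); rewrite /= vdist0 => x_pd.
have := pdist0 y l; rewrite pdist_sym => yl_le.
have : chart_const ch * pdist (y, l) (vzero n, vzero p) <=
       c_h * (1 + c_k * Lf) * vnorm y.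
  rewrite Rmult_assoc; apply: Rmult_le_compat_l; first by lra.
  by rewrite /c_k in l_le *; lra.
by rewrite /c_h; lra.
Qed.

(* If moreover (x, l) lies where H is injective, then l = q x: the
   conjugacy forces f x = M x l, and M x is invertible. *)
Lemma lift_on_graph x l : invertible (M x) -> f x = mulmv (M x) (q x) ->
  H1 (vsub (f x) (mulmv (M x) l)) l = f (h1 x l) ->
  H1 (vzero p) l = f (h1 x l) ->
  chart_dom cH (vsub (f x) (mulmv (M x) l), l) -> chart_dom cH (vzero p, l) ->
  l = q x.
Proof.
move=> [B inv] fx conj_l k_l Hdom Hdom0.
have := chart_lower Hdom Hdom0; rewrite /= conj_l -k_l pdist_refl Rmult_0_r => le0.
have := pdist_ge1 (vsub (f x) (mulmv (M x) l), l) (vzero p, l).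
rewrite /= vdist0 => F_le.
have F0 : vsub (f x) (mulmv (M x) l) = vzero p by apply: vnorm_eq0; lra.
have fx_l : f x = mulmv (M x) l.
  apply: functional_extensionality => i.
  by have := congr1 (fun v => v i) F0; rewrite /vsub /vzero; lra.
by rewrite -(proj2 (inv l)) -fx_l fx (proj2 (inv (q x))).
Qed.

Lemma phi_onto : exists r C, 0 < r /\ 0 <= C /\
  forall y, vnorm y < r -> exists x, vnorm x <= C * vnorm y /\ phi x = y.
Proof.
case: conjugacy => rN [rN0 conjN].
case: (near0_ball (near0_and M_inv (near0_and M_bound f_eq))) => rE [rE0 good].
have ck0 := chart_const_pos ck; have ch0 := chart_const_pos ch.
have Cl0 : 0 <= c_k * Lf by apply: Rmult_le_pos; rewrite /c_k; lra.
have Cx0 : 0 <= c_h * (1 + c_k * Lf) by apply: Rmult_le_pos; rewrite /c_h; lra.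
have small := near0_and (near0_lin n 1 rf0)
  (near0_and (near0_lin n Lf (chart_radius_pos ck))
  (near0_and (near0_lin n (1 + c_k * Lf) (chart_radius_pos ch))
  (near0_and (near0_lin n (c_h * (1 + c_k * Lf)) rE0)
  (near0_and (near0_lin n (c_h * (1 + c_k * Lf)) rf0)
  (near0_and (near0_lin n (c_h * (1 + c_k * Lf) + c_k * Lf) rN0)
  (near0_lin n (Lf * (c_h * (1 + c_k * Lf)) + Cm * (c_k * Lf) + c_k * Lf)
     (chart_radius_pos cH))))))).
case: (near0_ball small) => r [r0 small_r].
exists r, (c_h * (1 + c_k * Lf)); split; first exact: r0.
split; first exact: Cx0.
move=> y y_lt.
case: (small_r y y_lt) => y_rf [fy_k [y_h [x_E [x_f [xl_N F_H]]]]].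
have {}y_rf : vnorm y < rf by lra.
case: (lift_point y_rf fy_k y_h) => x [l [l_le x_le hx kl]].
have y0 := vnorm_ge0 y; have x0 := vnorm_ge0 x; have l0 := vnorm_ge0 l.
case: (good x ltac:(lra)) => invM [Mx_le fx].
have F_le : vnorm (vsub (f x) (mulmv (M x) l)) <= Lf * vnorm x + Cm * vnorm l.
  apply: Rle_trans (vnorm_sub _ _) _.
  by have := lip_ball_at0 f0 f_lip (x := x) ltac:(lra); have := Mx_le l; lra.
have := Rmult_le_compat_l _ _ _ Lf0 x_le; have := Rmult_le_compat_l _ _ _ Cm0 l_le.
move=> Ml_le fx_le.
have Hdom : chart_dom cH (vsub (f x) (mulmv (M x) l), l).
  by apply: chart_ball; apply: Rle_lt_trans (pdist0 _ _) _; lra.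
have Hdom0 : chart_dom cH (vzero p, l).
  apply: chart_ball; apply: Rle_lt_trans (pdist0 _ _) _; rewrite vnorm0.
  by have := Rmult_le_pos _ _ Lf0 x0; have := Rmult_le_pos _ _ Cm0 l0; lra.
have conj_xl : H1 (vsub (f x) (mulmv (M x) l)) l = f (h1 x l).
  by apply: conjN; rewrite pdist_sym; apply: Rle_lt_trans (pdist0 _ _) _; lra.
have l_q := lift_on_graph invM fx conj_xl ltac:(by rewrite hx) Hdom Hdom0.
by exists x; split => //; rewrite /phi -l_q.
Qed.

Theorem graph_conjugacy_bilip :
  bilip_germ (@vdist n) (@vdist n) (vzero n) (vzero n) (fun x => h1 x (q x)).
Proof.
case: (near0_ball regular_near0) => rho [rho0 reg].
case: phi_onto => r [C [r0 [C0 onto]]].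
have ch0 := chart_const_pos ch; have ck0 := chart_const_pos ck.
have cu0 : 0 <= c_h * (1 + Lq) by apply: Rmult_le_pos; rewrite /c_h; lra.
have cl0 : 0 <= c_h * (1 + c_k * Lf).
  apply: Rmult_le_pos; first by rewrite /c_h; lra.
  by have := Rmult_le_pos _ _ (Rlt_le _ _ ck0) Lf0; rewrite /c_k; lra.
apply: (@bilip_germ_of_estimates n phi rho r
          (c_h * (1 + Lq) + c_h * (1 + c_k * Lf) + 1) C) => //.
- lra.
- exact: phi0.
- move=> x x' /reg [x_rq dom kdom key phi_rf] /reg [x'_rq dom' kdom' key' phi'_rf].
  have up := phi_upper x_rq x'_rq dom dom'.
  have low := phi_lower dom dom' kdom kdom' key key' phi_rf phi'_rf.
  have := vdist_ge0 x x'; have := vdist_ge0 (phi x) (phi x'); split; nra.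
Qed.
End GraphConjugacy.

Theorem lemma3p3 (n p : nat)
  (f g : vec n -> vec p) (s : vec n -> vec n) (M : vec n -> mat p)
  (h1 : vec n -> vec p -> vec n) (H1 : vec p -> vec p -> vec p) :
  smooth_germ f -> f (vzero n) = vzero p ->
  smooth_germ g -> g (vzero n) = vzero p ->
  diffeo_germ s ->
  smooth_mat_germ M -> near0 (fun x => invertible (M x)) ->
  near0 (fun x => f x = mulmv (M x) (g (s x))) ->
  bilip_germ (@pdist n p) (@pdist n p) (vzero n, vzero p) (vzero n, vzero p)
    (fun z => (h1 z.1 z.2, z.2)) ->
  bilip_germ (@pdist p p) (@pdist p p) (vzero p, vzero p) (vzero p, vzero p)
    (fun z => (H1 z.1 z.2, z.2)) ->
  near00 (fun x l => H1 (vsub (f x) (mulmv (M x) l)) l = f (h1 x l)) ->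
  bilip_germ (@vdist p) (@vdist p) (vzero p) (vzero p) (fun l => H1 (vzero p) l) ->
  bilip_germ (@vdist n) (@vdist n) (vzero n) (vzero n) (fun x => h1 x (g (s x))).
Proof.
move=> f_smooth f0 g_smooth g0 s_diffeo M_smooth M_inv f_eq.
move=> h_bilip H_bilip conj k_bilip.
have [s0 s_smooth] := diffeo_germ_smooth s_diffeo.
have [Lf [Lf0 [rf [rf0 f_lip]]]] := smooth_lip f_smooth.
have [Lg [Lg0 g_lip]] := smooth_lip g_smooth.
have [Ls [Ls0 s_lip]] := smooth_lip s_smooth.
have [rq [rq0 q_lip]] := lip_germ_comp Ls0 Lg0 s0 s_lip g_lip.
have q0 : g (s (vzero n)) = vzero p by rewrite s0 g0.
have [Cm [Cm0 M_bound]] := smooth_mat_operator_bound M_smooth.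
case: (bilip_germ_chart h_bilip) => ch; case: (bilip_germ_chart H_bilip) => cH.
case: (bilip_germ_chart k_bilip) => ck.
exact: (graph_conjugacy_bilip rf0 rq0 Lf0 (Rmult_le_pos _ _ Lg0 Ls0) Cm0 f0 q0
          f_lip q_lip M_inv M_bound f_eq conj ch cH ck).
Qed.
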